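(* For any natural numbers $N,d \geq 1$, \[ \sum_{m \in \Sigma_{d,N}} \frac{1}{m} < + \infty.\]
   Context: For $N\ge1$ let $\Pi_N=\{\prod_{n=1}^N n^{k_n} : k_n\in\{0,1,2,\dots\}\}$ and for $d\ge1$ let $\Sigma_{d,N}=\{m_1+\dots+m_d : m_i\in\Pi_N\}$ (a set of positive integers; the sum runs over distinct elements). *)

From mathcomp Require Import all_boot all_order all_algebra.
From mathcomp Require Import all_classical all_reals ereal esum.
Set Implicit Arguments. Unset Strict Implicit. Unset Printing Implicit Defensive.
Import Order.TTheory GRing.Theory Num.Theory.
Local Open Scope classical_set_scope.

Definition Pi (N : nat) : set nat :=
  [set m | exists k : nat -> nat, m = (\prod_(1 <= n < N.+1) n ^ k n)%N].

Definition Sigma (d N : nat) : set nat :=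
  [set s | exists m : 'I_d -> nat, (forall i, Pi N (m i)) /\ s = (\sum_(i < d) m i)%N].

From mathcomp Require Import all_boot all_order all_algebra.
From mathcomp Require Import all_classical all_reals ereal esum.
From mathcomp Require Import ring lra.
Import Order.TTheory GRing.Theory Num.Theory.
Local Open Scope classical_set_scope.
Local Open Scope ring_scope.

(* Every element of [Sigma d N] is [s = \sum_i \prod_(2 <= n <= N) n ^ e (i, n)] for an
   exponent vector [e] with [D = d * (N - 1)] entries, and distinct elements have distinct
   vectors.  Since [s >= 2 ^ max e], any [a < 1] with [a ^ D >= 1/2] (Bernoulli) gives
   [1/s <= a ^ (D * max e) <= a ^ (\sum e)], so every finite partial sum of [1/s] is bounded
   by the sum of [a ^ (\sum e)] over all vectors, namely [(1 - a) ^ (- D)]. *)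

Lemma Bernoulli_ineq (R : realFieldType) n (t : R) :
  -1 <= t -> 1 + n%:R * t <= (1 + t) ^+ n.
Proof.
move=> t_ge; elim: n => [|n IHn]; first by rewrite mul0r addr0 expr0.
have t1_ge0 : 0 <= 1 + t by rewrite -lerBlDl sub0r.
have nt2_ge0 : 0 <= n%:R * t ^+ 2 by rewrite mulr_ge0 ?sqr_ge0.
rewrite exprSr -natr1; apply: le_trans (ler_wpM2r t1_ge0 IHn).
have -> : (1 + n%:R * t) * (1 + t) = 1 + (n%:R + 1) * t + n%:R * t ^+ 2 by ring.
by rewrite lerDl.
Qed.

Lemma exists_lt1_exprn_ge_half (R : realFieldType) n :
  exists2 a : R, 0 <= a < 1 & 2^-1 <= a ^+ n.
Proof.
have n_ge0 : (0 : R) <= n%:R by [].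
pose x : R := (2 * (n%:R + 1))^-1.
have x_gt0 : 0 < x by rewrite invr_gt0; lra.
have x_le1 : x <= 1 by rewrite invf_le1; lra.
exists (1 - x); first by apply/andP; split; lra.
apply: le_trans (Bernoulli_ineq _ n (- x) _); last by lra.
have nx : n%:R * x + x = 2^-1 by rewrite -[x in _ + x]mul1r -mulrDl /x; field; lra.
rewrite mulrN; lra.
Qed.

Lemma sumr_exprn_le (R : realFieldType) (a : R) n :
  0 <= a < 1 -> \sum_(i < n) a ^+ i <= (1 - a)^-1.
Proof.
case/andP=> a_ge0 a_lt1; have a1_gt0 : 0 < 1 - a by rewrite subr_gt0.
have -> : \sum_(i < n) a ^+ i = (1 - a)^-1 * (1 - a ^+ n).
  apply: (mulfI (lt0r_neq0 a1_gt0)); rewrite mulrA mulfV ?lt0r_neq0 // mul1r.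
  by rewrite -[1 - a ^+ n]opprB subrX1 -[1 - a]opprB mulNr.
rewrite ler_piMr ?invr_ge0 ?(ltW a1_gt0) //.
by rewrite lerBlDr lerDl exprn_ge0.
Qed.

Lemma invn_le_prod_expr (R : realFieldType) (I : finType) (e : I -> nat) (s : nat) (a : R) :
  (0 < s)%N -> (forall i, 2 ^ e i <= s)%N -> 0 <= a <= 1 -> 2^-1 <= a ^+ #|I| ->
  s%:R^-1 <= \prod_i a ^+ e i.
Proof.
move=> s_gt0 e_le /andP[a_ge0 a_le1] half_le.
set K := (\max_i e i)%N.
have two_K : (2 ^ K <= s)%N.
  rewrite /K; elim/big_ind: _ => [|x y hx hy|i _]; rewrite ?expn0 //.
  by case: (leqP x y) => xy; rewrite ?(maxn_idPr xy) ?(maxn_idPl (ltnW xy)).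
apply: (@le_trans _ _ (2 ^ K)%:R^-1).
  by rewrite lef_pV2 ?posrE ?ltr0n ?expn_gt0 ?ler_nat.
rewrite natrX -exprVn; apply: le_trans (_ : (a ^+ #|I|) ^+ K <= _).
  by rewrite lerXn2r // nnegrE ?invr_ge0 ?exprn_ge0.
rewrite -exprM prodrXr ler_wiXn2l // -sum_nat_const.
by apply: leq_sum => i _; apply: leq_bigmax.
Qed.

Lemma sum_distinct_monomials_le (R : realFieldType) (I : finType) (T : eqType)
    (l : seq T) (e : T -> I -> nat) (a : R) :
  uniq l -> {in l &, injective e} -> 0 <= a < 1 ->
  \sum_(x <- l) \prod_i a ^+ e x i <= ((1 - a)^-1) ^+ #|I|.
Proof.
move=> l_uniq e_inj /[dup] a01 /andP[a_ge0 a_lt1].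
set M := (\max_(x <- l) \max_i e x i)%N.
have e_le x i : x \in l -> (e x i <= M)%N.
  move=> xl; apply: leq_trans (leq_bigmax i) _.
  exact: (leq_bigmax_seq (F := fun x => \max_i e x i)).
pose f x : {ffun I -> 'I_M.+1} := [ffun i => inord (e x i)].
have fE x i : x \in l -> f x i = e x i :> nat.
  by move=> xl; rewrite ffunE inordK // ltnS e_le.
have f_inj : {in l &, injective f}.
  move=> x y xl yl fxy; apply: e_inj => //; apply/funext => i.
  by rewrite -fE // fxy fE.
rewrite big_seq (eq_bigr (fun x => \prod_i a ^+ f x i)); last first.
  by move=> x xl; apply: eq_bigr => i _; rewrite fE.
rewrite -big_seq -(big_map f xpredT (fun g => \prod_i a ^+ g i)).
rewrite big_uniq ?map_inj_in_uniq //.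
apply: le_trans (_ : \sum_(g : {ffun I -> 'I_M.+1}) \prod_i a ^+ g i <= _).
  rewrite [leRHS](bigID (mem (map f l))) /= lerDl.
  by apply: sumr_ge0 => g _; apply: prodr_ge0 => i _; apply: exprn_ge0.
rewrite -(bigA_distr_bigA (fun (i : I) (k : 'I_M.+1) => a ^+ k)) /= prodr_const.
rewrite lerXn2r ?nnegrE ?sumr_exprn_le //; last by rewrite invr_ge0 subr_ge0 ltW.
by apply: sumr_ge0 => k _; apply: exprn_ge0.
Qed.

Definition monomial_sum {d N} (e : 'I_d * 'I_N.-1 -> nat) : nat :=
  \sum_(i < d) \prod_(j < N.-1) j.+2 ^ e (i, j).

Lemma Pi_prod_exp N m : Pi N m -> exists k, m = (\prod_(j < N.-1) j.+2 ^ k j)%N.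
Proof.
case=> k ->; exists (fun j : 'I_N.-1 => k j.+2).
case: N => [|N]; first by rewrite big_geq // big_ord0.
rewrite big_ltn // exp1n mul1n.
change (\prod_(0 + 2 <= i < N.+2) i ^ k i = \prod_(j < N) j.+2 ^ k j.+2)%N.
by rewrite big_addn subn2 big_mkord; apply: eq_bigr => j _; rewrite addn2.
Qed.

Lemma Sigma_monomial_sum d N s :
  Sigma d N s -> exists e : 'I_d * 'I_N.-1 -> nat, s = monomial_sum e.
Proof.
case=> m [m_Pi ->].
have /fin_all_exists[k kP] : forall i, exists k, m i = (\prod_(j < N.-1) j.+2 ^ k j)%N.
  by move=> i; apply: Pi_prod_exp.
by exists (fun p => k p.1 p.2); apply: eq_bigr => i _; apply: kP.
Qed.

Lemma exp2_le_monomial_sum d N (e : 'I_d * 'I_N.-1 -> nat) p :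
  (2 ^ e p <= monomial_sum e)%N.
Proof.
case: p => i j; rewrite /monomial_sum (bigD1 i) //= (bigD1 j) //=.
apply: leq_trans (leq_addr _ _); apply: leq_trans (leq_pmulr _ _).
  by case: (e (i, j)) => // k; rewrite leq_exp2r.
by apply: prodn_cond_gt0 => j' _; rewrite expn_gt0.
Qed.

Lemma monomial_sum_gt0 d N (e : 'I_d * 'I_N.-1 -> nat) :
  (0 < d)%N -> (0 < monomial_sum e)%N.
Proof.
case: d e => // d e _; rewrite /monomial_sum big_ord_recl ltn_addr //.
by apply: prodn_cond_gt0 => j _; rewrite expn_gt0.
Qed.

Lemma Sigma_exponents d N : exists e : nat -> 'I_d * 'I_N.-1 -> nat,
  forall s, Sigma d N s -> monomial_sum (e s) = s.
Proof.
suff /choice[e eK] : forall s, exists e : 'I_d * 'I_N.-1 -> nat,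
    Sigma d N s -> monomial_sum e = s by exists e.
move=> s.
have [/Sigma_monomial_sum[e ->]|not_Sigma] := pselect (Sigma d N s); first by exists e.
by exists (fun=> 0%N).
Qed.

Lemma sum_inv_Sigma_le (R : realFieldType) d N (a : R) (l : seq nat) :
  (0 < d)%N -> uniq l -> (forall s, s \in l -> Sigma d N s) ->
  0 <= a < 1 -> 2^-1 <= a ^+ #|{: 'I_d * 'I_N.-1}| ->
  \sum_(s <- l) (s%:R)^-1 <= ((1 - a)^-1) ^+ #|{: 'I_d * 'I_N.-1}|.
Proof.
move=> d_gt0 l_uniq l_Sigma /[dup] a01 /andP[a_ge0 a_lt1] half_le.
have [e Sigma_eK] := Sigma_exponents d N.
have eK s : s \in l -> monomial_sum (e s) = s by move/l_Sigma/Sigma_eK.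
apply: le_trans (@sum_distinct_monomials_le R _ _ l e a l_uniq _ a01); last first.
  by move=> s t sl tl est; rewrite -(eK s) // -(eK t) // est.
rewrite big_seq [leRHS]big_seq; apply: ler_sum => s sl.
rewrite -[in leLHS](eK s) //; apply: invn_le_prod_expr => //.
- exact: monomial_sum_gt0.
- exact: exp2_le_monomial_sum.
- by rewrite a_ge0 ltW.
Qed.

Theorem proposition6p10 (R : realType) (N d : nat) (hN : (1 <= N)%N) (hd : (1 <= d)%N) :
  (\esum_(m in Sigma d N) ((m%:R : R)^-1)%:E < +oo)%E.
Proof.
have [a a01 half_le] := exists_lt1_exprn_ge_half R #|{: 'I_d * 'I_N.-1}|.
apply: le_lt_trans (ltry (((1 - a)^-1) ^+ #|{: 'I_d * 'I_N.-1}|)).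
apply: ge_ereal_sup => _ [X [X_fin X_Sigma] <-].
rewrite fsumEFin // lee_fin fsbig_finite //=.
apply: sum_inv_Sigma_le => //; first exact: finmap.fset_uniq.
by move=> s; rewrite in_fset_set // inE => /X_Sigma.
Qed.
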